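(* There are at least nine pairwise non-isomorphic semi-equivelar maps on the closed surface of Euler characteristic $-1$ (three of type $(3^5,4)$, two of type $(3,4,8,4)$, two of type $(4,6,16)$ and two of type $(6^2,8)$). *)

From HB Require Import structures.
From mathcomp Require Import all_boot all_order all_algebra.
Set Implicit Arguments. Unset Strict Implicit. Unset Printing Implicit Defensive.

(* A map on n vertices ('I_n) is given by its list of faces; each face is a
   cycle of vertices (a duplicate-free sequence read cyclically). *)

Definition face_adj {n} (C : seq 'I_n) (x y : 'I_n) : bool :=
  [&& x \in C, y \in C & (next C x == y) || (next C y == x)].

Definition is_edge {n} (F : seq (seq 'I_n)) (x y : 'I_n) : bool :=
  (x != y) && has (fun C => face_adj C x y) F.

Definition face {n} (F : seq (seq 'I_n)) (i : 'I_(size F)) : seq 'I_n :=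
  nth [::] F i.

Definition num_edges {n} (F : seq (seq 'I_n)) : nat :=
  #|[set p : 'I_n * 'I_n | (val p.1 < val p.2)%N && is_edge F p.1 p.2]|.

Definition euler_char {n} (F : seq (seq 'I_n)) : int :=
  (n%:Z - (num_edges F)%:Z + (size F)%:Z)%R.

Definition cyc_eq {T : Type} (s t : seq T) : Prop :=
  exists k, rot k s = t \/ rot k (rev s) = t.

(* polyhedral map on a closed connected surface (without the vertex-link
   condition, which is part of [vertex_type] below): faces are polygons,
   every edge lies in exactly two faces, two distinct faces meet in the
   empty set, a vertex or an edge, and the edge graph is connected. *)
Definition polyhedral_map {n} (F : seq (seq 'I_n)) : Prop :=
  [/\ (forall C, C \in F -> uniq C /\ (3 <= size C)%N),
      (forall x y, is_edge F x y ->
         #|[set i : 'I_(size F) | face_adj (face i) x y]| = 2),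
      (forall i j : 'I_(size F), i != j ->
         let S := [seq v <- face i | v \in face j] in
         (size S <= 1)%N \/
         (size S = 2 /\ forall x y, x \in S -> y \in S -> x != y ->
             face_adj (face i) x y /\ face_adj (face j) x y))
    & (forall x y : 'I_n, connect (fun a b => is_edge F a b) x y)].

(* This also says the link of v is a cycle. *)
Definition vertex_type {n} (F : seq (seq 'I_n)) (v : 'I_n) (T : seq nat) : Prop :=
  exists s : seq 'I_(size F),
    [/\ uniq s,
        (forall i, i \in s <-> v \in face i),
        (forall i, i \in s -> exists w : 'I_n,
             face_adj (face i) v w && face_adj (face (next s i)) v w)
      & cyc_eq [seq size (face i) | i <- s] T].

Definition semi_equivelar {n} (F : seq (seq 'I_n)) (T : seq nat) : Prop :=
  polyhedral_map F /\ forall v, vertex_type F v T.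

Definition map_iso {n m} (F : seq (seq 'I_n)) (G : seq (seq 'I_m)) : Prop :=
  exists f : 'I_n -> 'I_m,
    [/\ bijective f,
        (forall C, C \in F -> exists2 D, D \in G & cyc_eq (map f C) D)
      & (forall D, D \in G -> exists2 C, C \in F & cyc_eq (map f C) D)].

Definition Map := {n : nat & seq (seq 'I_n)}.

Definition type_of (i : 'I_9) : seq nat :=
  if (val i < 3)%N then [:: 3; 3; 3; 3; 3; 4]
  else if (val i < 5)%N then [:: 3; 4; 8; 4]
  else if (val i < 7)%N then [:: 4; 6; 16]
  else [:: 6; 6; 8].

From HB Require Import structures.
From mathcomp Require Import all_boot all_order all_algebra.
From mathcomp Require Import zify.
Set Implicit Arguments. Unset Strict Implicit. Unset Printing Implicit Defensive.

(* The nine maps are written down explicitly: faces are lists of vertex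
   labels 0..n-1, and for every vertex we also record the list of faces
   around it in cyclic order.  The proof is by computational reflection.
   - Boolean checkers on such label lists ([semi_equivelarb]) are shown to
     imply [polyhedral_map] and [vertex_type] for the decoded map over 'I_n,
     and the number of edges is expressed as a computable sum, so that the
     Euler characteristic can be evaluated.
   - Isomorphism classes are separated by combinatorial invariants: for a
     relation expression r (built from "lie on a common k-gon" by counting
     common intermediate vertices), the number of vertex pairs related by r
     is preserved by every map isomorphism; a matrix computation evaluates
     this number on the label lists.
   The theorem follows by running all checkers on the nine maps and
   observing that their invariant vectors are pairwise distinct. *)

(* Decoding label lists into maps over 'I_n; out-of-range labels are dropped,
   which never happens when every label is below n ([labels_below]). *)
Definition ords_of n (s : seq nat) : seq 'I_n := pmap insub s.
Definition decode n (L : seq (seq nat)) : seq (seq 'I_n) := map (@ords_of n) L.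
Definition labels_below n (L : seq (seq nat)) : bool := all (all (fun x => x < n)) L.

Lemma ords_ofK n s : all (fun x => x < n) s -> map val (@ords_of n s) = s.
Proof.
move=> hs; rewrite /ords_of (pmap_filter (@insubK _ _ _)).
by apply/all_filterP; apply: sub_all hs => x hx; rewrite insubT.
Qed.

Lemma decodeK n L : labels_below n L -> map (map val) (decode n L) = L.
Proof. by elim: L => //= C L IH /andP[hC hL]; rewrite ords_ofK // IH. Qed.

Lemma card_ord_count k (P : nat -> bool) :
  #|[set i : 'I_k | P i]| = count P (iota 0 k).
Proof.
rewrite cardsE -sum1_card -(big_mkord (fun i => P i) (fun _ => 1)).
by rewrite /index_iota subn0 sum1_count.
Qed.

Lemma card_pair_count n (P : nat -> nat -> bool) :
  #|[set p : 'I_n * 'I_n | P p.1 p.2]| =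
  sumn [seq count (P x) (iota 0 n) | x <- iota 0 n].
Proof.
rewrite cardsE -sum1_card.
rewrite (eq_bigl (fun p : 'I_n * 'I_n => true && P p.1 p.2)) //.
rewrite -(pair_big_dep xpredT (fun (i j : 'I_n) => P i j) (fun _ _ => 1)).
rewrite sumnE big_map -(big_mkord xpredT (fun i => \sum_(j < n | P i j) 1)).
rewrite /index_iota subn0; apply: eq_bigr => i _.
by rewrite -(big_mkord (fun j => P i j) (fun _ => 1)) /index_iota subn0 sum1_count.
Qed.

Lemma count_nth_iota T (d : T) (a : pred T) s :
  count (fun i => a (nth d s i)) (iota 0 (size s)) = count a s.
Proof. by rewrite -count_map -/(mkseq _ _) mkseq_nth. Qed.

Lemma mem_iota_ord k (x : 'I_k) : (x : nat) \in iota 0 k.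
Proof. by rewrite mem_iota /=. Qed.

Lemma is_edge_sym n (F : seq (seq 'I_n)) : symmetric (is_edge F).
Proof.
move=> a b; rewrite /is_edge eq_sym; congr andb; apply: eq_has => C.
by rewrite /face_adj andbCA orbC.
Qed.

Definition face_adjn (C : seq nat) (x y : nat) : bool :=
  [&& x \in C, y \in C & (next C x == y) || (next C y == x)].
Definition is_edgen (L : seq (seq nat)) (x y : nat) : bool :=
  (x != y) && has (fun C => face_adjn C x y) L.

(* Boolean checkers, one per clause of [polyhedral_map]; connectivity is
   certified by every nonzero vertex having a smaller neighbour. *)
Definition faces_okb (L : seq (seq nat)) : bool :=
  all (fun C => uniq C && (2 < size C)) L.
Definition edges_okb n (L : seq (seq nat)) : bool :=
  all (fun x => all (fun y =>
    is_edgen L x y ==> (count (fun C => face_adjn C x y) L == 2)) (iota 0 n)) (iota 0 n).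
Definition meetb (Ci Cj : seq nat) : bool :=
  let S := [seq v <- Ci | v \in Cj] in
  (size S <= 1) || ((size S == 2) &&
     all (fun x => all (fun y => (x != y) ==> face_adjn Ci x y && face_adjn Cj x y) S) S).
Definition meets_okb (L : seq (seq nat)) : bool :=
  all (fun i => all (fun j => (i != j) ==> meetb (nth [::] L i) (nth [::] L j))
    (iota 0 (size L))) (iota 0 (size L)).
Definition connectedb n (L : seq (seq nat)) : bool :=
  all (fun x => (x == 0) || has (fun y => (y < x) && is_edgen L x y) (iota 0 n)) (iota 0 n).

Definition cyc_eqb (a b : seq nat) : bool :=
  has (fun k => (rot k a == b) || (rot k (rev a) == b)) (iota 0 (size a).+1).
Definition starb n (L : seq (seq nat)) (T : seq nat) (v : nat) (s : seq nat) : bool :=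
  [&& all (fun i => i < size L) s, uniq s,
      all (fun i => (i \in s) == (v \in nth [::] L i)) (iota 0 (size L)),
      all (fun i => has (fun w => face_adjn (nth [::] L i) v w &&
                          face_adjn (nth [::] L (next s i)) v w) (iota 0 n)) s
    & cyc_eqb [seq size (nth [::] L i) | i <- s] T].

Definition semi_equivelarb n L T (stars : seq (seq nat)) : bool :=
  [&& labels_below n L, faces_okb L, edges_okb n L, meets_okb L, connectedb n L
    & all (fun v => starb n L T v (nth [::] stars v)) (iota 0 n)].

Definition num_edgesn n L : nat :=
  sumn [seq count (fun y => (x < y) && is_edgen L x y) (iota 0 n) | x <- iota 0 n].

Section Decoded.
Variables (n : nat) (L : seq (seq nat)).
Hypothesis labelsL : labels_below n L.
Hypothesis facesL : faces_okb L.
Let F := decode n L.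
Let valF : map (map val) F = L := decodeK labelsL.

Lemma size_decode : size F = size L.
Proof. by rewrite -valF size_map. Qed.

Lemma decode_face_ok C : C \in F -> uniq C /\ 2 < size C.
Proof.
move=> hC; have : map val C \in L by rewrite -valF map_f.
move/(allP facesL)/andP => [u s].
by rewrite (map_inj_uniq val_inj) size_map in u s.
Qed.

Lemma face_adjE (C : seq 'I_n) (x y : 'I_n) :
  uniq C -> face_adj C x y = face_adjn (map val C) x y.
Proof.
move=> u.
by rewrite /face_adj /face_adjn !(mem_map val_inj) !(next_map val_inj) // !(inj_eq val_inj).
Qed.

Lemma is_edgeE (x y : 'I_n) : is_edge F x y = is_edgen L x y.
Proof.
rewrite /is_edge /is_edgen (inj_eq val_inj) -valF has_map; congr andb.
by apply: eq_in_has => C hC /=; rewrite face_adjE //; case: (decode_face_ok hC).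
Qed.

Lemma faceE (i : 'I_(size F)) : map val (face i) = nth [::] L i.
Proof. by rewrite /face -valF (nth_map [::]). Qed.

Lemma face_uniq (i : 'I_(size F)) : uniq (face i).
Proof. by case: (decode_face_ok (mem_nth [::] (ltn_ord i))). Qed.

Lemma card_face_adj (x y : 'I_n) :
  #|[set i : 'I_(size F) | face_adj (face i) x y]| = count (fun C => face_adjn C x y) L.
Proof.
rewrite (card_ord_count _ (fun i => face_adj (nth [::] F i) x y)).
rewrite (count_nth_iota [::] (fun C => face_adj C x y) F) -valF count_map.
by apply: eq_in_count => C hC /=; rewrite face_adjE //; case: (decode_face_ok hC).
Qed.

Lemma decode_edge_faces : edges_okb n L ->
  forall x y, is_edge F x y -> #|[set i : 'I_(size F) | face_adj (face i) x y]| = 2.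
Proof.
move=> hedges x y; rewrite is_edgeE card_face_adj => hxy.
by have := allP (allP hedges _ (mem_iota_ord x)) _ (mem_iota_ord y); rewrite hxy => /eqP.
Qed.

Lemma decode_meet : meets_okb L ->
  forall i j : 'I_(size F), i != j ->
    let S := [seq v <- face i | v \in face j] in
    (size S <= 1)%N \/
    (size S = 2 /\ forall x y, x \in S -> y \in S -> x != y ->
        face_adj (face i) x y /\ face_adj (face j) x y).
Proof.
move=> hmeet i j hij /=.
have mem_idx (k : 'I_(size F)) : (k : nat) \in iota 0 (size L).
  by rewrite -size_decode mem_iota_ord.
have := allP (allP hmeet _ (mem_idx i)) _ (mem_idx j).
rewrite (inj_eq val_inj) hij /= -!faceE /meetb.
set S := [seq v <- face i | v \in face j].
have valS : [seq v <- map val (face i) | v \in map val (face j)] = map val S.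
  by rewrite filter_map; congr map; apply: eq_filter => v /=; rewrite (mem_map val_inj).
rewrite valS size_map; case/orP => [small | /andP[/eqP two adjS]]; [by left | right].
split => // x y hx hy hxy.
have := allP (allP adjS _ (map_f val hx)) _ (map_f val hy).
by rewrite (inj_eq val_inj) hxy /= => /andP[a b]; rewrite !face_adjE ?face_uniq.
Qed.

(* the edge graph is connected: every vertex is linked to vertex 0 *)
Lemma decode_connected : connectedb n L ->
  forall x y : 'I_n, connect (fun a b => is_edge F a b) x y.
Proof.
move=> hconn x y.
have to_zero k (x0 : 'I_n) : val x0 = k -> forall z : 'I_n, val z = 0 ->
    connect (fun a b => is_edge F a b) x0 z.
  elim/ltn_ind: k x0 => k IH x0 hx z hz.
  case/orP: (allP hconn _ (mem_iota_ord x0)) => [/eqP x0_0 | /hasP [w hw /andP [wx hedge]]].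
    by have -> : x0 = z by apply: val_inj; rewrite /= x0_0 hz.
  have wn : w < n by rewrite mem_iota in hw.
  apply: (connect_trans (y := Ordinal wn)); first by apply: connect1; rewrite is_edgeE.
  by apply: (IH w _ (Ordinal wn)) => //; rewrite -hx.
have zn : 0 < n by apply: leq_ltn_trans (leq0n x) (ltn_ord x).
apply: (connect_trans (y := Ordinal zn)); first exact: (to_zero _ x erefl).
by rewrite (sym_connect_sym (@is_edge_sym _ F)); exact: (to_zero _ y erefl).
Qed.

Lemma decode_polyhedral :
  edges_okb n L -> meets_okb L -> connectedb n L -> polyhedral_map F.
Proof.
move=> hedges hmeet hconn; split.
- by move=> C /decode_face_ok.
- exact: decode_edge_faces.
- exact: decode_meet.
- exact: decode_connected.
Qed.

Lemma decode_vertex_type (T : seq nat) (v : 'I_n) (s : seq nat) :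
  starb n L T v s -> vertex_type F v T.
Proof.
case/and5P=> s_idx s_uniq s_mem s_adj s_type.
have s_idx' : all (fun i => i < size F) s by rewrite size_decode.
set s' := ords_of (size F) s.
have vals' : map val s' = s by apply: ords_ofK.
have mem_s' (i : 'I_(size F)) : (i \in s') = (val i \in s).
  by rewrite -vals' (mem_map val_inj).
have s'_uniq : uniq s' by rewrite -(map_inj_uniq val_inj) vals'.
exists s'; split => //.
- move=> i; rewrite mem_s'.
  have hi : (i : nat) \in iota 0 (size L) by rewrite -size_decode mem_iota_ord.
  by move/eqP: (allP s_mem _ hi) => ->; rewrite -faceE (mem_map val_inj).
- move=> i; rewrite mem_s' => hi.
  case/hasP: (allP s_adj _ hi) => w hw /andP[a b].
  have wn : w < n by rewrite mem_iota in hw.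
  rewrite -vals' (next_map val_inj s'_uniq) in b.
  by exists (Ordinal wn); rewrite !face_adjE ?face_uniq // !faceE a.
- have -> : [seq size (face i) | i <- s'] = [seq size (nth [::] L i) | i <- s].
    by rewrite -vals' -map_comp; apply: eq_map => i /=; rewrite -faceE size_map.
  by case/hasP: s_type => k _ /orP[/eqP h|/eqP h]; exists k; [left | right].
Qed.

Lemma num_edges_decode : num_edges F = num_edgesn n L.
Proof.
rewrite /num_edges.
have -> : [set p : 'I_n * 'I_n | (val p.1 < val p.2) && is_edge F p.1 p.2] =
    [set p : 'I_n * 'I_n | (p.1 < p.2) && is_edgen L p.1 p.2].
  by apply/setP => p; rewrite !inE is_edgeE.
exact: (card_pair_count n (fun x y => (x < y) && is_edgen L x y)).
Qed.

Lemma decode_euler_m1 : (n + size L).+1 = num_edgesn n L -> euler_char F = (-1)%R.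
Proof. by move=> hE; rewrite /euler_char num_edges_decode size_decode -hE; lia. Qed.

End Decoded.

Lemma decode_semi_equivelar n L T stars :
  semi_equivelarb n L T stars -> semi_equivelar (decode n L) T.
Proof.
case/and5P => hlab hfaces hedges hmeet /andP[hconn hstars].
split; first exact: decode_polyhedral.
move=> v; apply: (decode_vertex_type hlab hfaces (s := nth [::] stars v)).
exact: (allP hstars _ (mem_iota_ord v)).
Qed.

Inductive relexp := FaceRel of nat | Compose of nat & relexp & relexp.

Fixpoint rel n (F : seq (seq 'I_n)) (r : relexp) (x y : 'I_n) : bool :=
  match r with
  | FaceRel k => has (fun C => [&& size C == k, x \in C & y \in C]) F
  | Compose k r1 r2 => k <= #|[set z | rel F r1 x z && rel F r2 z y]|
  end.

Definition rel_count n (F : seq (seq 'I_n)) (r : relexp) : nat :=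
  #|[set p : 'I_n * 'I_n | rel F r p.1 p.2]|.

Lemma cyc_eq_mem (T : eqType) (s t : seq T) : cyc_eq s t -> t =i s.
Proof. by case=> k [<-|<-] z; rewrite mem_rot ?mem_rev. Qed.

Lemma cyc_eq_size (T : Type) (s t : seq T) : cyc_eq s t -> size t = size s.
Proof. by case=> k [<-|<-]; rewrite size_rot ?size_rev. Qed.

Section Isomorphism.
Variables (n m : nat) (F : seq (seq 'I_n)) (G : seq (seq 'I_m)) (f : 'I_n -> 'I_m).
Hypothesis f_bij : bijective f.
Hypothesis FG : forall C, C \in F -> exists2 D, D \in G & cyc_eq (map f C) D.
Hypothesis GF : forall D, D \in G -> exists2 C, C \in F & cyc_eq (map f C) D.

Lemma rel_iso r x y : rel F r x y = rel G r (f x) (f y).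
Proof.
have f_inj := bij_inj f_bij; case: f_bij => g fK gK.
elim: r x y => [k|k r1 IH1 r2 IH2] x y /=.
- apply/hasP/hasP.
  + case=> C hC /and3P[/eqP hs hx hy]; case: (FG hC) => D hD hCD; exists D => //.
    by rewrite (cyc_eq_size hCD) size_map hs eqxx !(cyc_eq_mem hCD) !map_f.
  + case=> D hD /and3P[/eqP hs hx hy]; case: (GF hD) => C hC hCD; exists C => //.
    rewrite !(cyc_eq_mem hCD) !(mem_map f_inj) in hx hy.
    by rewrite -(size_map f) -(cyc_eq_size hCD) hs eqxx hx hy.
- congr (k <= _).
  rewrite -(card_imset [set z | rel F r1 x z && rel F r2 z y] f_inj).
  apply: eq_card => z; rewrite [in RHS]inE; apply/imsetP/idP.
    by case=> z' hz' ->; rewrite inE IH1 IH2 in hz'.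
  by move=> h; exists (g z); rewrite ?gK // inE IH1 IH2 gK.
Qed.

Lemma rel_count_iso r : rel_count F r = rel_count G r.
Proof.
have f_inj := bij_inj f_bij; have [g fK gK] := f_bij.
pose h := fun p : 'I_n * 'I_n => (f p.1, f p.2).
have h_inj : injective h by move=> [a b] [c d] [/f_inj -> /f_inj ->].
rewrite /rel_count -(card_imset [set p : 'I_n * 'I_n | rel F r p.1 p.2] h_inj).
apply: eq_card => p; rewrite [in RHS]inE; apply/imsetP/idP.
  by case=> q hq ->; rewrite inE in hq; rewrite /= -!rel_iso.
move=> hp; exists (g p.1, g p.2); last by rewrite /h /= !gK; case: p hp.
by rewrite inE /= !rel_iso !gK.
Qed.
End Isomorphism.

Lemma map_iso_rel_count n m (F : seq (seq 'I_n)) (G : seq (seq 'I_m)) :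
  map_iso F G -> forall r, rel_count F r = rel_count G r.
Proof. by case=> f [f_bij FG GF] r; apply: (rel_count_iso f_bij FG GF). Qed.

Definition mx_get (M : seq (seq bool)) x y : bool := nth false (nth [::] M x) y.
Definition mx_of n (f : nat -> nat -> bool) : seq (seq bool) :=
  [seq [seq f x y | y <- iota 0 n] | x <- iota 0 n].

Lemma mx_ofE n f x y : x < n -> y < n -> mx_get (mx_of n f) x y = f x y.
Proof.
move=> hx hy; rewrite /mx_get /mx_of (nth_map 0) ?size_iota // nth_iota //.
by rewrite (nth_map 0) ?size_iota // nth_iota.
Qed.

Fixpoint reln n (L : seq (seq nat)) (r : relexp) : seq (seq bool) :=
  match r with
  | FaceRel k => mx_of n (fun x y => has (fun C => [&& size C == k, x \in C & y \in C]) L)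
  | Compose k r1 r2 => let M1 := reln n L r1 in let M2 := reln n L r2 in
      mx_of n (fun x y => k <= count (fun z => mx_get M1 x z && mx_get M2 z y) (iota 0 n))
  end.

(* number of true entries; the matrix is passed as an argument so that it is
   evaluated only once *)
Definition mx_count n (M : seq (seq bool)) : nat :=
  sumn [seq count (fun y => mx_get M x y) (iota 0 n) | x <- iota 0 n].

Definition rel_countn n (L : seq (seq nat)) (r : relexp) : nat := mx_count n (reln n L r).

Lemma rel_decode n L r (x y : 'I_n) :
  labels_below n L -> rel (decode n L) r x y = mx_get (reln n L r) x y.
Proof.
move=> hlab; elim: r x y => [k|k r1 IH1 r2 IH2] x y /=; rewrite mx_ofE //.
- rewrite -{2}(decodeK hlab) has_map; apply: eq_has => C /=.
  by rewrite size_map !(mem_map val_inj).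
- congr (k <= _); rewrite -(card_ord_count n (fun z =>
    mx_get (reln n L r1) x z && mx_get (reln n L r2) z y)).
  by apply: eq_card => z; rewrite !inE IH1 IH2.
Qed.

Lemma rel_count_decode n L r :
  labels_below n L -> rel_count (decode n L) r = rel_countn n L r.
Proof.
move=> hlab; rewrite /rel_count /rel_countn /mx_count -(card_pair_count n (mx_get (reln n L r))).
by apply: eq_card => p; rewrite !inE rel_decode.
Qed.

(* Numbers 0-2 have type (3^5,4) on 12 vertices, 3-4 type
   (3,4,8,4) on 24 vertices, 5-6 type (4,6,16) on 48 vertices and 7-8 type
   (6^2,8) on 24 vertices.  [starsk] lists, for each vertex, the indices in
   [facesk] of the faces around it, in cyclic order. *)
Definition faces0 : seq (seq nat) := [:: [:: 0; 1; 7; 2]; [:: 11; 3; 8; 4]; [:: 9; 10; 5; 6]; [:: 0; 1; 4]; [:: 0; 2; 5]; [:: 0; 3; 5]; [:: 0; 3; 6]; [:: 0; 4; 6]; [:: 1; 7; 9]; [:: 1; 8; 4]; [:: 1; 8; 10]; [:: 1; 9; 10]; [:: 7; 2; 11]; [:: 7; 11; 10]; [:: 7; 8; 9]; [:: 7; 8; 10]; [:: 2; 11; 4]; [:: 2; 4; 6]; [:: 2; 5; 6]; [:: 11; 3; 5]; [:: 11; 10; 5]; [:: 3; 8; 9]; [:: 3; 9; 6]].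
Definition stars0 : seq (seq nat) := [:: [:: 0; 3; 7; 6; 5; 4]; [:: 0; 3; 9; 10; 11; 8]; [:: 0; 4; 18; 17; 16; 12]; [:: 1; 19; 5; 6; 22; 21]; [:: 1; 9; 3; 7; 17; 16]; [:: 2; 18; 4; 5; 19; 20]; [:: 2; 18; 17; 7; 6; 22]; [:: 0; 8; 14; 15; 13; 12]; [:: 1; 9; 10; 15; 14; 21]; [:: 2; 11; 8; 14; 21; 22]; [:: 2; 11; 10; 15; 13; 20]; [:: 1; 16; 12; 13; 20; 19]].
Definition faces1 : seq (seq nat) := [:: [:: 0; 1; 7; 2]; [:: 11; 3; 8; 4]; [:: 9; 10; 5; 6]; [:: 0; 1; 4]; [:: 0; 2; 3]; [:: 0; 3; 6]; [:: 0; 4; 5]; [:: 0; 5; 6]; [:: 1; 7; 8]; [:: 1; 8; 9]; [:: 1; 4; 10]; [:: 1; 9; 10]; [:: 7; 2; 11]; [:: 7; 11; 10]; [:: 7; 8; 5]; [:: 7; 10; 5]; [:: 2; 11; 6]; [:: 2; 3; 9]; [:: 2; 9; 6]; [:: 11; 3; 6]; [:: 11; 4; 10]; [:: 3; 8; 9]; [:: 8; 4; 5]].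
Definition stars1 : seq (seq nat) := [:: [:: 0; 3; 6; 7; 5; 4]; [:: 0; 3; 10; 11; 9; 8]; [:: 0; 4; 17; 18; 16; 12]; [:: 1; 19; 5; 4; 17; 21]; [:: 1; 20; 10; 3; 6; 22]; [:: 2; 7; 6; 22; 14; 15]; [:: 2; 7; 5; 19; 16; 18]; [:: 0; 8; 14; 15; 13; 12]; [:: 1; 21; 9; 8; 14; 22]; [:: 2; 11; 9; 21; 17; 18]; [:: 2; 11; 10; 20; 13; 15]; [:: 1; 19; 16; 12; 13; 20]].
Definition faces2 : seq (seq nat) := [:: [:: 0; 1; 7; 2]; [:: 3; 10; 8; 4]; [:: 9; 5; 6; 11]; [:: 0; 1; 4]; [:: 0; 2; 3]; [:: 0; 3; 5]; [:: 0; 4; 6]; [:: 0; 5; 6]; [:: 1; 7; 8]; [:: 1; 8; 9]; [:: 1; 4; 5]; [:: 1; 9; 5]; [:: 7; 2; 10]; [:: 7; 10; 11]; [:: 7; 8; 6]; [:: 7; 6; 11]; [:: 2; 3; 11]; [:: 2; 10; 9]; [:: 2; 9; 11]; [:: 3; 10; 11]; [:: 3; 4; 5]; [:: 10; 8; 9]; [:: 8; 4; 6]].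
Definition stars2 : seq (seq nat) := [:: [:: 0; 3; 6; 7; 5; 4]; [:: 0; 3; 10; 11; 9; 8]; [:: 0; 4; 16; 18; 17; 12]; [:: 1; 19; 16; 4; 5; 20]; [:: 1; 20; 10; 3; 6; 22]; [:: 2; 7; 5; 20; 10; 11]; [:: 2; 7; 6; 22; 14; 15]; [:: 0; 8; 14; 15; 13; 12]; [:: 1; 21; 9; 8; 14; 22]; [:: 2; 11; 9; 21; 17; 18]; [:: 1; 19; 13; 12; 17; 21]; [:: 2; 15; 13; 19; 16; 18]].
Definition faces3 : seq (seq nat) := [:: [:: 0; 1; 2]; [:: 3; 5; 9]; [:: 4; 11; 7]; [:: 12; 6; 8]; [:: 10; 18; 16]; [:: 19; 13; 17]; [:: 21; 23; 15]; [:: 22; 20; 14]; [:: 0; 1; 5; 3]; [:: 1; 2; 8; 6]; [:: 0; 2; 7; 4]; [:: 5; 9; 17; 13]; [:: 3; 9; 16; 10]; [:: 4; 11; 6; 12]; [:: 11; 7; 14; 20]; [:: 12; 8; 15; 21]; [:: 10; 18; 13; 19]; [:: 18; 16; 15; 23]; [:: 19; 17; 14; 22]; [:: 21; 23; 20; 22]; [:: 0; 4; 12; 21; 22; 19; 10; 3]; [:: 1; 6; 11; 20; 23; 18; 13; 5]; [:: 2; 7; 14; 17; 9; 16; 15; 8]].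
Definition stars3 : seq (seq nat) := [:: [:: 0; 8; 20; 10]; [:: 0; 8; 21; 9]; [:: 0; 9; 22; 10]; [:: 1; 8; 20; 12]; [:: 2; 10; 20; 13]; [:: 1; 8; 21; 11]; [:: 3; 9; 21; 13]; [:: 2; 10; 22; 14]; [:: 3; 9; 22; 15]; [:: 1; 11; 22; 12]; [:: 4; 12; 20; 16]; [:: 2; 13; 21; 14]; [:: 3; 13; 20; 15]; [:: 5; 11; 21; 16]; [:: 7; 14; 22; 18]; [:: 6; 15; 22; 17]; [:: 4; 12; 22; 17]; [:: 5; 11; 22; 18]; [:: 4; 16; 21; 17]; [:: 5; 16; 20; 18]; [:: 7; 14; 21; 19]; [:: 6; 15; 20; 19]; [:: 7; 18; 20; 19]; [:: 6; 17; 21; 19]].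
Definition faces4 : seq (seq nat) := [:: [:: 0; 1; 2]; [:: 3; 5; 9]; [:: 4; 11; 7]; [:: 12; 6; 8]; [:: 10; 18; 16]; [:: 19; 20; 14]; [:: 21; 22; 15]; [:: 23; 13; 17]; [:: 0; 1; 5; 3]; [:: 1; 2; 8; 6]; [:: 0; 2; 7; 4]; [:: 5; 9; 17; 13]; [:: 3; 9; 16; 10]; [:: 4; 11; 6; 12]; [:: 11; 7; 14; 20]; [:: 12; 8; 15; 21]; [:: 10; 18; 20; 19]; [:: 18; 16; 15; 22]; [:: 19; 14; 17; 23]; [:: 21; 22; 13; 23]; [:: 0; 4; 12; 21; 23; 19; 10; 3]; [:: 1; 6; 11; 20; 18; 22; 13; 5]; [:: 2; 7; 14; 17; 9; 16; 15; 8]].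
Definition stars4 : seq (seq nat) := [:: [:: 0; 8; 20; 10]; [:: 0; 8; 21; 9]; [:: 0; 9; 22; 10]; [:: 1; 8; 20; 12]; [:: 2; 10; 20; 13]; [:: 1; 8; 21; 11]; [:: 3; 9; 21; 13]; [:: 2; 10; 22; 14]; [:: 3; 9; 22; 15]; [:: 1; 11; 22; 12]; [:: 4; 12; 20; 16]; [:: 2; 13; 21; 14]; [:: 3; 13; 20; 15]; [:: 7; 11; 21; 19]; [:: 5; 14; 22; 18]; [:: 6; 15; 22; 17]; [:: 4; 12; 22; 17]; [:: 7; 11; 22; 18]; [:: 4; 16; 21; 17]; [:: 5; 16; 20; 18]; [:: 5; 14; 21; 16]; [:: 6; 15; 20; 19]; [:: 6; 17; 21; 19]; [:: 7; 18; 20; 19]].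
Definition faces5 : seq (seq nat) := [:: [:: 0; 1; 4; 9; 6; 2]; [:: 3; 5; 11; 18; 14; 8]; [:: 13; 21; 28; 20; 12; 7]; [:: 22; 17; 10; 16; 25; 30]; [:: 24; 32; 39; 31; 23; 15]; [:: 33; 27; 19; 26; 35; 41]; [:: 44; 46; 45; 40; 34; 38]; [:: 47; 42; 36; 29; 37; 43]; [:: 0; 1; 5; 3]; [:: 4; 9; 16; 10]; [:: 2; 6; 12; 7]; [:: 11; 18; 26; 19]; [:: 8; 14; 23; 15]; [:: 13; 21; 17; 22]; [:: 28; 20; 29; 36]; [:: 30; 25; 34; 38]; [:: 24; 32; 27; 33]; [:: 39; 31; 40; 45]; [:: 41; 35; 37; 43]; [:: 44; 46; 42; 47]; [:: 0; 2; 7; 13; 22; 30; 38; 44; 47; 43; 41; 33; 24; 15; 8; 3]; [:: 1; 4; 10; 17; 21; 28; 36; 42; 46; 45; 39; 32; 27; 19; 11; 5]; [:: 9; 6; 12; 20; 29; 37; 35; 26; 18; 14; 23; 31; 40; 34; 25; 16]].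
Definition stars5 : seq (seq nat) := [:: [:: 0; 8; 20]; [:: 0; 8; 21]; [:: 0; 10; 20]; [:: 1; 8; 20]; [:: 0; 9; 21]; [:: 1; 8; 21]; [:: 0; 10; 22]; [:: 2; 10; 20]; [:: 1; 12; 20]; [:: 0; 9; 22]; [:: 3; 9; 21]; [:: 1; 11; 21]; [:: 2; 10; 22]; [:: 2; 13; 20]; [:: 1; 12; 22]; [:: 4; 12; 20]; [:: 3; 9; 22]; [:: 3; 13; 21]; [:: 1; 11; 22]; [:: 5; 11; 21]; [:: 2; 14; 22]; [:: 2; 13; 21]; [:: 3; 13; 20]; [:: 4; 12; 22]; [:: 4; 16; 20]; [:: 3; 15; 22]; [:: 5; 11; 22]; [:: 5; 16; 21]; [:: 2; 14; 21]; [:: 7; 14; 22]; [:: 3; 15; 20]; [:: 4; 17; 22]; [:: 4; 16; 21]; [:: 5; 16; 20]; [:: 6; 15; 22]; [:: 5; 18; 22]; [:: 7; 14; 21]; [:: 7; 18; 22]; [:: 6; 15; 20]; [:: 4; 17; 21]; [:: 6; 17; 22]; [:: 5; 18; 20]; [:: 7; 19; 21]; [:: 7; 18; 20]; [:: 6; 19; 20]; [:: 6; 17; 21]; [:: 6; 19; 21]; [:: 7; 19; 20]].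
Definition faces6 : seq (seq nat) := [:: [:: 0; 1; 4; 9; 6; 2]; [:: 3; 5; 11; 18; 14; 8]; [:: 13; 21; 28; 20; 12; 7]; [:: 22; 17; 10; 16; 25; 30]; [:: 24; 32; 41; 31; 23; 15]; [:: 33; 43; 38; 29; 39; 44]; [:: 46; 36; 47; 42; 34; 40]; [:: 37; 27; 19; 26; 35; 45]; [:: 0; 1; 5; 3]; [:: 4; 9; 16; 10]; [:: 2; 6; 12; 7]; [:: 11; 18; 26; 19]; [:: 8; 14; 23; 15]; [:: 13; 21; 17; 22]; [:: 28; 20; 29; 38]; [:: 30; 25; 34; 40]; [:: 24; 32; 43; 33]; [:: 41; 31; 42; 47]; [:: 44; 39; 35; 45]; [:: 46; 36; 27; 37]; [:: 0; 2; 7; 13; 22; 30; 40; 46; 37; 45; 44; 33; 24; 15; 8; 3]; [:: 1; 4; 10; 17; 21; 28; 38; 43; 32; 41; 47; 36; 27; 19; 11; 5]; [:: 9; 6; 12; 20; 29; 39; 35; 26; 18; 14; 23; 31; 42; 34; 25; 16]].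
Definition stars6 : seq (seq nat) := [:: [:: 0; 8; 20]; [:: 0; 8; 21]; [:: 0; 10; 20]; [:: 1; 8; 20]; [:: 0; 9; 21]; [:: 1; 8; 21]; [:: 0; 10; 22]; [:: 2; 10; 20]; [:: 1; 12; 20]; [:: 0; 9; 22]; [:: 3; 9; 21]; [:: 1; 11; 21]; [:: 2; 10; 22]; [:: 2; 13; 20]; [:: 1; 12; 22]; [:: 4; 12; 20]; [:: 3; 9; 22]; [:: 3; 13; 21]; [:: 1; 11; 22]; [:: 7; 11; 21]; [:: 2; 14; 22]; [:: 2; 13; 21]; [:: 3; 13; 20]; [:: 4; 12; 22]; [:: 4; 16; 20]; [:: 3; 15; 22]; [:: 7; 11; 22]; [:: 7; 19; 21]; [:: 2; 14; 21]; [:: 5; 14; 22]; [:: 3; 15; 20]; [:: 4; 17; 22]; [:: 4; 16; 21]; [:: 5; 16; 20]; [:: 6; 15; 22]; [:: 7; 18; 22]; [:: 6; 19; 21]; [:: 7; 19; 20]; [:: 5; 14; 21]; [:: 5; 18; 22]; [:: 6; 15; 20]; [:: 4; 17; 21]; [:: 6; 17; 22]; [:: 5; 16; 21]; [:: 5; 18; 20]; [:: 7; 18; 20]; [:: 6; 19; 20]; [:: 6; 17; 21]].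
Definition faces7 : seq (seq nat) := [:: [:: 0; 1; 4; 10; 6; 2]; [:: 0; 1; 5; 12; 8; 3]; [:: 7; 11; 19; 14; 6; 2]; [:: 7; 11; 4; 10; 18; 15]; [:: 9; 13; 21; 16; 8; 3]; [:: 9; 13; 5; 12; 20; 17]; [:: 22; 23; 21; 16; 18; 15]; [:: 22; 23; 19; 14; 20; 17]; [:: 0; 2; 7; 15; 22; 17; 9; 3]; [:: 1; 4; 11; 19; 23; 21; 13; 5]; [:: 10; 6; 14; 20; 12; 8; 16; 18]].
Definition stars7 : seq (seq nat) := [:: [:: 0; 1; 8]; [:: 0; 1; 9]; [:: 0; 2; 8]; [:: 1; 4; 8]; [:: 0; 3; 9]; [:: 1; 5; 9]; [:: 0; 2; 10]; [:: 2; 3; 8]; [:: 1; 4; 10]; [:: 4; 5; 8]; [:: 0; 3; 10]; [:: 2; 3; 9]; [:: 1; 5; 10]; [:: 4; 5; 9]; [:: 2; 7; 10]; [:: 3; 6; 8]; [:: 4; 6; 10]; [:: 5; 7; 8]; [:: 3; 6; 10]; [:: 2; 7; 9]; [:: 5; 7; 10]; [:: 4; 6; 9]; [:: 6; 7; 8]; [:: 6; 7; 9]].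
Definition faces8 : seq (seq nat) := [:: [:: 0; 1; 4; 10; 6; 2]; [:: 0; 1; 5; 12; 8; 3]; [:: 7; 11; 20; 14; 6; 2]; [:: 7; 11; 4; 10; 19; 15]; [:: 9; 17; 22; 16; 8; 3]; [:: 9; 17; 20; 14; 21; 18]; [:: 23; 13; 22; 16; 19; 15]; [:: 23; 13; 5; 12; 21; 18]; [:: 0; 2; 7; 15; 23; 18; 9; 3]; [:: 1; 4; 11; 20; 17; 22; 13; 5]; [:: 10; 6; 14; 21; 12; 8; 16; 19]].
Definition stars8 : seq (seq nat) := [:: [:: 0; 1; 8]; [:: 0; 1; 9]; [:: 0; 2; 8]; [:: 1; 4; 8]; [:: 0; 3; 9]; [:: 1; 7; 9]; [:: 0; 2; 10]; [:: 2; 3; 8]; [:: 1; 4; 10]; [:: 4; 5; 8]; [:: 0; 3; 10]; [:: 2; 3; 9]; [:: 1; 7; 10]; [:: 6; 7; 9]; [:: 2; 5; 10]; [:: 3; 6; 8]; [:: 4; 6; 10]; [:: 4; 5; 9]; [:: 5; 7; 8]; [:: 3; 6; 10]; [:: 2; 5; 9]; [:: 5; 7; 10]; [:: 4; 6; 9]; [:: 6; 7; 8]].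

Definition catalogue : seq (nat * seq (seq nat)) :=
  [:: (12, faces0); (12, faces1); (12, faces2); (24, faces3); (24, faces4);
      (48, faces5); (48, faces6); (24, faces7); (24, faces8)].
Definition stars_catalogue : seq (seq (seq nat)) :=
  [:: stars0; stars1; stars2; stars3; stars4; stars5; stars6; stars7; stars8].

Definition catalogue_map (i : 'I_9) : Map :=
  let d := nth (0, [::]) catalogue i in existT _ d.1 (decode d.1 d.2).

Definition catalogue_okb (k : nat) : bool :=
  let d := nth (0, [::]) catalogue k in
  semi_equivelarb d.1 d.2 (type_of (inZp k)) (nth [::] stars_catalogue k) &&
  ((d.1 + size d.2).+1 == num_edgesn d.1 d.2).

Lemma catalogue_ok : all catalogue_okb (iota 0 9).
Proof. by vm_compute. Qed.

Definition separating_exprs : seq relexp :=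
  [:: FaceRel 3; FaceRel 4; FaceRel 6; FaceRel 8;
      Compose 6 (FaceRel 3) (FaceRel 3);
      Compose 1 (FaceRel 4) (FaceRel 4); Compose 1 (FaceRel 6) (FaceRel 6);
      Compose 1 (Compose 1 (FaceRel 4) (FaceRel 6)) (Compose 1 (FaceRel 4) (FaceRel 6))].

Definition invariants (d : nat * seq (seq nat)) : seq nat :=
  map (rel_countn d.1 d.2) separating_exprs.

Lemma invariants_uniq : uniq (map invariants catalogue).
Proof. by vm_compute. Qed.

Lemma catalogue_semi_equivelar (i : 'I_9) :
  semi_equivelar (tagged (catalogue_map i)) (type_of i) /\
  euler_char (tagged (catalogue_map i)) = (-1)%R.
Proof.
have := allP catalogue_ok _ (mem_iota_ord i).
rewrite /catalogue_okb valZpK => /andP[hsemi /eqP hE].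
split; first exact: decode_semi_equivelar hsemi.
by case/and3P: hsemi => hlab hfaces _; exact: decode_euler_m1 hlab hfaces hE.
Qed.

Lemma catalogue_nonisomorphic (i j : 'I_9) :
  i != j -> ~ map_iso (tagged (catalogue_map i)) (tagged (catalogue_map j)).
Proof.
move=> hij hiso; move/negP: hij; apply.
have labels (k : 'I_9) : labels_below (nth (0, [::]) catalogue k).1 (nth (0, [::]) catalogue k).2.
  by case/andP: (allP catalogue_ok _ (mem_iota_ord k)) => /andP[].
have same_inv : invariants (nth (0, [::]) catalogue i) = invariants (nth (0, [::]) catalogue j).
  by apply: eq_map => r; rewrite -!rel_count_decode // (map_iso_rel_count hiso).
have hi : i < size (map invariants catalogue) by rewrite size_map.
have hj : j < size (map invariants catalogue) by rewrite size_map.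
have := nth_uniq [::] hi hj invariants_uniq.
by rewrite !(nth_map (0, [::])) // same_inv eqxx => /esym/eqP/val_inj ->.
Qed.

Theorem theorem1 :
  exists M : 'I_9 -> Map,
    (forall i, semi_equivelar (tagged (M i)) (type_of i) /\
               euler_char (tagged (M i)) = (-1)%R) /\
    (forall i j, i != j -> ~ map_iso (tagged (M i)) (tagged (M j))).
Proof.
exists catalogue_map; split.
- exact: catalogue_semi_equivelar.
- exact: catalogue_nonisomorphic.
Qed.
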